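(* For every $n\ge 3$, under the uniform model, $$E_U(\Phi_n)=\binom{n}{2}\left(\frac{1}{2n-3}\,{}_3F_2\!\left(\begin{matrix}2,\ 2,\ 2-n\\ 1,\ 4-2n\end{matrix};2\right)-\frac12\cdot\frac{(2n-2)!!}{(2n-3)!!}\right),$$ where ${}_3F_2(\cdots;2)=\sum_{k=0}^{n-2}\frac{(2)_k(2)_k(2-n)_k}{(1)_k(4-2n)_k}\frac{2^k}{k!}$ with $(a)_k=a(a+1)\cdots(a+k-1)$. Moreover $E_U(\Phi_n)\sim\frac{\sqrt{\pi}}{4}n^{5/2}$ as $n\to\infty$.
   Context: $\mathcal{BT}_n$ is the set of (isomorphism classes of) binary phylogenetic trees with leaves bijectively labeled by $\{1,\dots,n\}$ (rooted, every internal node with exactly two children); $|\mathcal{BT}_n|=(2n-3)!!$. For $T\in\mathcal{BT}_n$, $\Phi(T)=\sum_{1\le i<j\le n}\delta_T(LCA_T(i,j))$, where $\delta_T$ is depth (number of arcs from the root) and $LCA$ is lowest common ancestor. $\Phi_n$ is $\Phi(T)$ for random $T\in\mathcal{BT}_n$. The uniform model gives every tree in $\mathcal{BT}_n$ probability $1/(2n-3)!!$; $E_U$ is expectation under it. $m!!$ denotes the double factorial. *)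

From Stdlib Require Import Reals Lra Lia Arith List Permutation.
Import ListNotations.
Open Scope R_scope.

(* Rooted binary trees with nat-labelled leaves; children are ordered here,
   isomorphism (swapping children) is handled by [tiso] below. *)
Inductive tree : Type :=
| Leaf : nat -> tree
| Node : tree -> tree -> tree.

Fixpoint leaves (t : tree) : list nat :=
  match t with
  | Leaf i => [i]
  | Node a b => leaves a ++ leaves b
  end.

Definition is_BT (n : nat) (t : tree) : Prop :=
  Permutation (leaves t) (seq 1 n).

Inductive tiso : tree -> tree -> Prop :=
| tiso_leaf i : tiso (Leaf i) (Leaf i)
| tiso_node a b c d : tiso a c -> tiso b d -> tiso (Node a b) (Node c d)
| tiso_swap a b c d : tiso a d -> tiso b c -> tiso (Node a b) (Node c d).

Fixpoint lca_depth (t : tree) (i j : nat) : nat :=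
  match t with
  | Leaf _ => 0
  | Node a b =>
      if (existsb (Nat.eqb i) (leaves a) && existsb (Nat.eqb j) (leaves a))%bool
      then S (lca_depth a i j)
      else if (existsb (Nat.eqb i) (leaves b) && existsb (Nat.eqb j) (leaves b))%bool
      then S (lca_depth b i j)
      else 0
  end.

Definition Phi (n : nat) (t : tree) : nat :=
  fold_right plus 0%nat
    (flat_map (fun i => map (fun j => lca_depth t i j) (seq (S i) (n - i)))
              (seq 1 n)).

(* l is a list of representatives of the isomorphism classes of BT_n,
   one per class. *)
Definition enumerates_BT (n : nat) (l : list tree) : Prop :=
  Forall (is_BT n) l /\
  (forall t, is_BT n t -> exists t', In t' l /\ tiso t t') /\
  ForallOrdPairs (fun a b => ~ tiso a b) l.

(* Mean of Phi over such a list = expectation under the uniform model. *)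
Definition mean_Phi (n : nat) (l : list tree) : R :=
  fold_right Rplus 0 (map (fun t => INR (Phi n t)) l) / INR (length l).

Definition EU_Phi_is (n : nat) (e : R) : Prop :=
  (exists l, enumerates_BT n l) /\
  (forall l, enumerates_BT n l -> mean_Phi n l = e).

Fixpoint dfact (m : nat) : nat :=
  match m with
  | O => 1%nat
  | S O => 1%nat
  | S ((S k) as p) => (m * dfact k)%nat
  end.

Fixpoint poch (a : R) (k : nat) : R :=
  match k with
  | O => 1
  | S k' => poch a k' * (a + INR k')
  end.

Definition F32 (n : nat) : R :=
  sum_f_R0 (fun k => poch 2 k * poch 2 k * poch (2 - INR n) k
                     / (poch 1 k * poch (4 - 2 * INR n) k)
                     * 2 ^ k / INR (fact k)) (n - 2).

Definition EU_formula (n : nat) : R :=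
  C n 2 * (/ (2 * INR n - 3) * F32 n
           - / 2 * (INR (dfact (2 * n - 2)) / INR (dfact (2 * n - 3)))).

From Stdlib Require Import Reals Lra Lia Arith List Permutation FinFun ZArith.
From Coquelicot Require Coquelicot.
Import ListNotations.

(* 1. Isomorphism [tiso] preserves the leaf multiset and all LCA depths, so Φ
      is a class invariant.  A tree with distinct leaves has a unique
      canonical representative [canonize t] (left child holds the smaller
      smallest leaf).
   2. Canonical trees on {1..n} arise exactly once by inserting leaf n at one
      of the 2n-3 edges (including above the root) of a canonical tree on
      {1..n-1}; deleting leaf n inverts this.  So the list [canon_trees n]
      enumerates BT_n, has (2n-3)!! elements, and [canonize] maps every
      enumeration to a permutation of it: E_U(Φ_n) is the mean over it.
   3. Φ(t) equals [pair_weight t], the sum of C(|v|,2) over non-root nodes v.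
      Summing over insertions gives linear recurrences for the totals of
      [pair_weight] and [size_weight] (sum of |v|), whose solution is
      Σ Φ = C(n,2) ((2n-2)!!/2 - (2n-3)!!).
   4. The 3F2 terms are (k+1)^2 b_k with b_{k+1}/b_k = 2(m-k)/(2m-k); a
      telescoping sum and a WZ pair give Σ_k b_k = (2m)!!/(2m-1)!!, so both
      the 3F2 formula and step 3 equal C(n,2) (w_{n-1}/2 - 1), where
      w_m = (2m)!!/(2m-1)!!.
   5. Wallis integrals ∫ sin^k give πm <= w_m^2 <= π(m+1/2), hence
      |E_U(Φ_n) / (√π/4 n^{5/2}) - 1| <= 4/√n, and the main theorem follows. *)

(** * Tree isomorphism *)

Lemma tiso_sym t u : tiso t u -> tiso u t.
Proof. induction 1; [constructor | apply tiso_node | apply tiso_swap]; auto. Qed.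

Lemma tiso_trans t u v : tiso t u -> tiso u v -> tiso t v.
Proof.
  intros H; revert v; induction H; intros v Hv; inversion Hv; subst;
    try constructor; auto; try (apply tiso_node; auto); apply tiso_swap; auto.
Qed.

Lemma tiso_leaves t u : tiso t u -> Permutation (leaves t) (leaves u).
Proof.
  induction 1; simpl; auto.
  - apply Permutation_app; auto.
  - rewrite Permutation_app_comm. apply Permutation_app; auto.
Qed.

Lemma existsb_eqb_In i l : existsb (Nat.eqb i) l = true <-> In i l.
Proof.
  rewrite existsb_exists. split.
  - intros [x [Hx E]]. apply Nat.eqb_eq in E. subst; auto.
  - intros H; exists i; split; auto. apply Nat.eqb_refl.
Qed.

Lemma existsb_eqb_notIn i l : existsb (Nat.eqb i) l = false <-> ~ In i l.
Proof.
  rewrite <- existsb_eqb_In. destruct (existsb (Nat.eqb i) l); intuition congruence.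
Qed.

Lemma existsb_eqb_perm i l l' :
  Permutation l l' -> existsb (Nat.eqb i) l = existsb (Nat.eqb i) l'.
Proof.
  intros H. apply Bool.eq_true_iff_eq. rewrite !existsb_eqb_In.
  split; apply Permutation_in; auto using Permutation_sym.
Qed.

Lemma NoDup_app_disjoint {A} (l1 l2 : list A) x :
  NoDup (l1 ++ l2) -> In x l1 -> In x l2 -> False.
Proof.
  induction l1; simpl; intros H H1 H2; auto.
  inversion H; subst. destruct H1 as [<-|H1]; eauto.
  apply H4. apply in_or_app; auto.
Qed.

(* With distinct leaves, swapping children cannot change which side contains
   both i and j, so LCA depths are isomorphism invariant. *)
Lemma lca_depth_tiso t u : tiso t u -> NoDup (leaves t) ->
  forall i j, lca_depth t i j = lca_depth u i j.
Proof.
  induction 1 as [k|a b c d Hac IHac Hbd IHbd|a b c d Had IHad Hbc IHbc];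
    intros Hnd i j; simpl in *; auto;
    pose proof (NoDup_app_remove_r _ _ Hnd); pose proof (NoDup_app_remove_l _ _ Hnd).
  - rewrite (existsb_eqb_perm i _ _ (tiso_leaves _ _ Hac)),
      (existsb_eqb_perm j _ _ (tiso_leaves _ _ Hac)),
      (existsb_eqb_perm i _ _ (tiso_leaves _ _ Hbd)),
      (existsb_eqb_perm j _ _ (tiso_leaves _ _ Hbd)), IHac, IHbd; auto.
  - rewrite <- (existsb_eqb_perm i _ _ (tiso_leaves _ _ Had)),
      <- (existsb_eqb_perm j _ _ (tiso_leaves _ _ Had)),
      <- (existsb_eqb_perm i _ _ (tiso_leaves _ _ Hbc)),
      <- (existsb_eqb_perm j _ _ (tiso_leaves _ _ Hbc)), <- IHad, <- IHbc; auto.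
    destruct (existsb (Nat.eqb i) (leaves a)) eqn:Ea;
    destruct (existsb (Nat.eqb j) (leaves a)) eqn:Eb;
    destruct (existsb (Nat.eqb i) (leaves b)) eqn:Ec;
    destruct (existsb (Nat.eqb j) (leaves b)) eqn:Ed; simpl; auto; exfalso;
    rewrite existsb_eqb_In in Ea, Eb, Ec, Ed; eapply NoDup_app_disjoint; eauto.
Qed.

Lemma Phi_tiso n t u : tiso t u -> NoDup (leaves t) -> Phi n t = Phi n u.
Proof.
  intros H Hnd. unfold Phi. f_equal. apply flat_map_ext. intros i.
  apply map_ext. intros j. apply lca_depth_tiso; auto.
Qed.

(** * Canonical representatives *)

Fixpoint min_leaf (t : tree) : nat :=
  match t with Leaf i => i | Node a b => Nat.min (min_leaf a) (min_leaf b) end.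

Lemma min_leaf_In t : In (min_leaf t) (leaves t).
Proof.
  induction t; simpl; auto.
  destruct (Nat.min_spec (min_leaf t1) (min_leaf t2)) as [[_ ->]|[_ ->]];
    apply in_or_app; auto.
Qed.

Lemma min_leaf_le t x : In x (leaves t) -> (min_leaf t <= x)%nat.
Proof.
  induction t; simpl; intros H.
  - destruct H as [->|[]]; auto.
  - apply in_app_or in H. destruct H; [specialize (IHt1 H) | specialize (IHt2 H)]; lia.
Qed.

Lemma min_leaf_unique t x : In x (leaves t) ->
  (forall y, In y (leaves t) -> (x <= y)%nat) -> min_leaf t = x.
Proof.
  intros H1 H2. pose proof (min_leaf_le _ _ H1). pose proof (H2 _ (min_leaf_In t)). lia.
Qed.

Lemma min_leaf_perm t u : Permutation (leaves t) (leaves u) -> min_leaf t = min_leaf u.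
Proof.
  intros H. apply min_leaf_unique.
  - eapply Permutation_in. apply Permutation_sym, H. apply min_leaf_In.
  - intros y Hy. apply min_leaf_le. eapply Permutation_in; eauto.
Qed.

Lemma min_leaf_tiso t u : tiso t u -> min_leaf t = min_leaf u.
Proof. intros H; apply min_leaf_perm, tiso_leaves, H. Qed.

Lemma leaves_nonempty t : (1 <= length (leaves t))%nat.
Proof.
  pose proof (min_leaf_In t). destruct (leaves t); simpl in *; [destruct H | lia].
Qed.

Fixpoint canonical (t : tree) : Prop :=
  match t with
  | Leaf _ => True
  | Node a b => canonical a /\ canonical b /\ (min_leaf a < min_leaf b)%nat
  end.

Fixpoint canonize (t : tree) : tree :=
  match t with
  | Leaf i => Leaf i
  | Node a b =>
      let a' := canonize a in let b' := canonize b in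
      if (min_leaf a' <? min_leaf b')%nat then Node a' b' else Node b' a'
  end.

Lemma canonize_tiso t : tiso t (canonize t).
Proof.
  induction t; simpl. constructor.
  destruct (min_leaf (canonize t1) <? min_leaf (canonize t2))%nat.
  - apply tiso_node; auto.
  - apply tiso_swap; auto.
Qed.

Lemma canonize_canonical t : NoDup (leaves t) -> canonical (canonize t).
Proof.
  induction t; simpl; auto. intros Hnd.
  pose proof (NoDup_app_remove_r _ _ Hnd). pose proof (NoDup_app_remove_l _ _ Hnd).
  rewrite <- (min_leaf_tiso _ _ (canonize_tiso t1)),
    <- (min_leaf_tiso _ _ (canonize_tiso t2)).
  assert (min_leaf t1 <> min_leaf t2).
  { intros E. apply (NoDup_app_disjoint _ _ (min_leaf t1) Hnd (min_leaf_In t1)).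
    rewrite E; apply min_leaf_In. }
  destruct (min_leaf t1 <? min_leaf t2)%nat eqn:E;
    [apply Nat.ltb_lt in E | apply Nat.ltb_ge in E]; simpl;
    rewrite <- (min_leaf_tiso _ _ (canonize_tiso t1)),
      <- (min_leaf_tiso _ _ (canonize_tiso t2)); intuition lia.
Qed.

Lemma canonical_tiso_eq t u : tiso t u -> canonical t -> canonical u -> t = u.
Proof.
  induction 1; simpl; intros Ht Hu; auto.
  - f_equal; intuition.
  - exfalso. rewrite (min_leaf_tiso _ _ H), (min_leaf_tiso _ _ H0) in Ht. lia.
Qed.

(** * Enumerating BT_n by leaf insertion *)

(* All trees obtained by attaching a new leaf k on an edge of t, or above its
   root; the first one is [Node t (Leaf k)]. *)
Fixpoint insert_leaf (t : tree) (k : nat) : list tree :=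
  match t with
  | Leaf i => [Node (Leaf i) (Leaf k)]
  | Node a b => Node (Node a b) (Leaf k) ::
      map (fun x => Node x b) (insert_leaf a k) ++ map (fun x => Node a x) (insert_leaf b k)
  end.

Fixpoint canon_trees (n : nat) : list tree :=
  match n with
  | 0 => []
  | S p => match p with
           | 0 => [Leaf 1]
           | _ => flat_map (fun t => insert_leaf t n) (canon_trees p)
           end
  end.

Lemma canon_trees_S p : (1 <= p)%nat ->
  canon_trees (S p) = flat_map (fun t => insert_leaf t (S p)) (canon_trees p).
Proof. destruct p; [lia | reflexivity]. Qed.

Lemma insert_leaf_leaves t k x : In x (insert_leaf t k) ->
  Permutation (leaves x) (leaves t ++ [k]).
Proof.
  revert x; induction t; simpl; intros x H.
  - destruct H as [<-|[]]; simpl; auto.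
  - destruct H as [<-|H]; simpl; auto.
    apply in_app_or in H; destruct H as [H|H]; apply in_map_iff in H;
      destruct H as [y [<- Hy]]; simpl; rewrite <- app_assoc.
    + rewrite (IHt1 _ Hy), <- app_assoc. apply Permutation_app_head, Permutation_app_comm.
    + apply Permutation_app_head, IHt2, Hy.
Qed.

Lemma insert_leaf_length t k : length (insert_leaf t k) = (2 * length (leaves t) - 1)%nat.
Proof.
  induction t; simpl; auto.
  rewrite length_app, !length_map, IHt1, IHt2, length_app.
  pose proof (leaves_nonempty t1). pose proof (leaves_nonempty t2). lia.
Qed.

Lemma insert_leaf_min t k x : In x (insert_leaf t k) ->
  (forall y, In y (leaves t) -> (y < k)%nat) -> min_leaf x = min_leaf t.
Proof.
  intros H Hk. apply min_leaf_unique.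
  - eapply Permutation_in. apply Permutation_sym, insert_leaf_leaves; eauto.
    apply in_or_app; left; apply min_leaf_In.
  - intros y Hy. eapply Permutation_in in Hy; [|apply insert_leaf_leaves; eauto].
    apply in_app_or in Hy; destruct Hy as [Hy|[<-|[]]].
    + apply min_leaf_le; auto.
    + apply Nat.lt_le_incl, Hk, min_leaf_In.
Qed.

Lemma insert_leaf_canonical t k x : In x (insert_leaf t k) -> canonical t ->
  (forall y, In y (leaves t) -> (y < k)%nat) -> canonical x.
Proof.
  revert x; induction t; simpl; intros x H Hc Hk.
  - destruct H as [<-|[]]; simpl; auto.
  - assert (Ha : forall y, In y (leaves t1) -> (y < k)%nat)
      by (intros; apply Hk, in_or_app; auto).
    assert (Hb : forall y, In y (leaves t2) -> (y < k)%nat)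
      by (intros; apply Hk, in_or_app; auto).
    destruct H as [<-|H]; simpl.
    + repeat split; try tauto. apply Nat.min_lt_iff. left. apply Ha, min_leaf_In.
    + apply in_app_or in H; destruct H as [H|H]; apply in_map_iff in H;
        destruct H as [y [<- Hy]]; simpl; rewrite (insert_leaf_min _ _ _ Hy) by auto;
        intuition.
Qed.

Lemma BT_NoDup n t : is_BT n t -> NoDup (leaves t).
Proof. intros H. eapply Permutation_NoDup. apply Permutation_sym, H. apply seq_NoDup. Qed.

Lemma BT_length n t : is_BT n t -> length (leaves t) = n.
Proof. intros H. rewrite (Permutation_length H). apply length_seq. Qed.

Lemma BT_In n t x : is_BT n t -> In x (leaves t) <-> (1 <= x < 1 + n)%nat.
Proof.
  intros H. rewrite <- in_seq. split; apply Permutation_in; auto using Permutation_sym.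
Qed.

Lemma canon_trees_sound n x : (1 <= n)%nat -> In x (canon_trees n) ->
  is_BT n x /\ canonical x.
Proof.
  revert x; induction n as [|p IH]; intros x Hn H. lia.
  destruct (Nat.eq_dec p 0) as [->|Hp].
  - destruct H as [<-|[]]. split; simpl; auto. unfold is_BT; simpl; auto.
  - rewrite canon_trees_S in H by lia. apply in_flat_map in H.
    destruct H as [t [Ht Hx]]. destruct (IH t ltac:(lia) Ht) as [Hb Hc]. split.
    + unfold is_BT. rewrite (insert_leaf_leaves _ _ _ Hx), seq_S.
      apply Permutation_app_tail, Hb.
    + eapply insert_leaf_canonical; eauto. intros y Hy.
      apply (BT_In _ _ _ Hb) in Hy. lia.
Qed.

Lemma flat_map_length_const {A B} (f : A -> list B) l c :
  (forall x, In x l -> length (f x) = c) -> length (flat_map f l) = (c * length l)%nat.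
Proof.
  induction l; simpl; intros H. lia.
  rewrite length_app, H, IHl; auto. lia.
Qed.

Lemma dfact_SS k : dfact (S (S k)) = (S (S k) * dfact k)%nat.
Proof. reflexivity. Qed.

Lemma canon_trees_length n : (1 <= n)%nat -> length (canon_trees n) = dfact (2 * n - 3).
Proof.
  induction n as [|p IH]; intros Hn. lia.
  destruct (Nat.eq_dec p 0) as [->|Hp]. reflexivity.
  rewrite canon_trees_S by lia. rewrite (flat_map_length_const _ _ (2 * p - 1)).
  2:{ intros t Ht. rewrite insert_leaf_length, (BT_length p t); [lia|].
      apply (canon_trees_sound p t); auto; lia. }
  rewrite IH by lia. destruct p as [|[|q]]; try lia; try reflexivity.
  replace (2 * S (S (S q)) - 3)%nat with (S (S (2 * S (S q) - 3))) by lia.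
  rewrite dfact_SS. f_equal. lia.
Qed.

(* Removing leaf k (and contracting its parent) inverts [insert_leaf]. *)
Definition is_leaf (k : nat) (t : tree) : bool :=
  match t with Leaf j => Nat.eqb j k | _ => false end.

Fixpoint delete_leaf (t : tree) (k : nat) : tree :=
  match t with
  | Leaf i => Leaf i
  | Node a b => if is_leaf k b then a
                else if existsb (Nat.eqb k) (leaves a) then Node (delete_leaf a k) b
                else Node a (delete_leaf b k)
  end.

Lemma insert_leaf_Node t k x : In x (insert_leaf t k) -> exists u v, x = Node u v.
Proof.
  destruct t; simpl; intros H.
  - destruct H as [<-|[]]; eauto.
  - destruct H as [<-|H]; eauto. apply in_app_or in H; destruct H as [H|H];
      apply in_map_iff in H; destruct H as [y [<- _]]; eauto.
Qed.

Lemma delete_insert_leaf t k x : In x (insert_leaf t k) -> ~ In k (leaves t) ->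
  delete_leaf x k = t.
Proof.
  revert x; induction t as [j|a IHa b IHb]; simpl; intros x H Hk.
  - destruct H as [<-|[]]; simpl. rewrite Nat.eqb_refl; auto.
  - assert (Ha : ~ In k (leaves a)) by (intros Hh; apply Hk, in_or_app; auto).
    assert (Hb : ~ In k (leaves b)) by (intros Hh; apply Hk, in_or_app; auto).
    destruct H as [<-|H]; simpl. rewrite Nat.eqb_refl; auto.
    apply in_app_or in H; destruct H as [H|H];
      apply in_map_iff in H; destruct H as [y [<- Hy]]; simpl.
    + assert (is_leaf k b = false).
      { destruct b; simpl; auto. apply Nat.eqb_neq. intros ->. apply Hb; simpl; auto. }
      assert (existsb (Nat.eqb k) (leaves y) = true).
      { apply existsb_eqb_In. eapply Permutation_in.
        apply Permutation_sym, insert_leaf_leaves; eauto. apply in_or_app; simpl; auto. }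
      rewrite H, H0, IHa; auto.
    + destruct (insert_leaf_Node _ _ _ Hy) as [u [v ->]]. simpl.
      apply existsb_eqb_notIn in Ha. rewrite Ha. f_equal. apply (IHb _ Hy Hb).
Qed.

Lemma tree_neq_Node a b : a <> Node a b.
Proof.
  revert b; induction a; intros b H; try discriminate.
  injection H; intros _ H1. eapply IHa1; eauto.
Qed.

Lemma insert_leaf_NoDup t k : ~ In k (leaves t) -> NoDup (insert_leaf t k).
Proof.
  intros Hk. induction t as [j|a IHa b IHb]; simpl.
  - repeat constructor; auto.
  - assert (Ha : ~ In k (leaves a)) by (intros H; apply Hk, in_or_app; auto).
    assert (Hb : ~ In k (leaves b)) by (intros H; apply Hk, in_or_app; auto).
    constructor.
    + intros H. apply in_app_or in H; destruct H as [H|H];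
        apply in_map_iff in H; destruct H as [y [E Hy]]; injection E; intros; subst.
      * apply Hb; simpl; auto.
      * eapply tree_neq_Node; eauto.
    + apply NoDup_app; try (apply Injective_map_NoDup; auto; intros u v E; injection E; auto).
      intros x H1 H2. apply in_map_iff in H1, H2.
      destruct H1 as [y [<- Hy]], H2 as [z [E Hz]]. injection E; intros; subst.
      apply Ha. eapply Permutation_in. apply Permutation_sym, (insert_leaf_leaves _ _ _ Hy).
      apply in_or_app; simpl; auto.
Qed.

Lemma NoDup_flat_map {A B} (f : A -> list B) l :
  NoDup l -> (forall x, In x l -> NoDup (f x)) ->
  (forall x y z, In x l -> In y l -> In z (f x) -> In z (f y) -> x = y) ->
  NoDup (flat_map f l).
Proof.
  induction l as [|a l IH]; simpl; intros H1 H2 H3. constructor.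
  inversion H1; subst. apply NoDup_app; auto.
  - apply IH; auto. intros; eapply H3; eauto.
  - intros z Hz Hz'. apply in_flat_map in Hz'. destruct Hz' as [y [Hy Hzy]].
    assert (a = y) by (eapply H3; eauto). subst. contradiction.
Qed.

Lemma canon_trees_NoDup n : NoDup (canon_trees n).
Proof.
  induction n as [|p IH]. constructor.
  destruct (Nat.eq_dec p 0) as [->|Hp]. repeat constructor; auto.
  assert (Hnew : forall w, In w (canon_trees p) -> ~ In (S p) (leaves w)).
  { intros w Hw H. apply (BT_In _ _ _ (proj1 (canon_trees_sound p w ltac:(lia) Hw))) in H.
    lia. }
  rewrite canon_trees_S by lia. apply NoDup_flat_map; auto.
  - intros t Ht. apply insert_leaf_NoDup, Hnew, Ht.
  - intros t u z Ht Hu H1 H2.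
    rewrite <- (delete_insert_leaf t (S p) z), <- (delete_insert_leaf u (S p) z); auto.
Qed.

Lemma delete_leaf_min u a k : Permutation (leaves u ++ [k]) (leaves a) ->
  (forall y, In y (leaves a) -> (y <= k)%nat) -> min_leaf u = min_leaf a.
Proof.
  intros H Hk. symmetry. apply min_leaf_unique.
  - eapply Permutation_in. apply H. apply in_or_app; left; apply min_leaf_In.
  - intros y Hy. eapply Permutation_in in Hy; [|apply Permutation_sym, H].
    apply in_app_or in Hy. destruct Hy as [Hy|[<-|[]]].
    + apply min_leaf_le; auto.
    + apply Hk. eapply Permutation_in. apply H. apply in_or_app; left; apply min_leaf_In.
Qed.

(* In a canonical tree whose largest leaf k is not alone, leaf k is never a
   left child leaf, and deleting it gives a canonical tree into which k
   re-inserts to recover t. *)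
Lemma delete_leaf_spec t k : canonical t -> NoDup (leaves t) -> In k (leaves t) ->
  (forall y, In y (leaves t) -> (y <= k)%nat) -> (2 <= length (leaves t))%nat ->
  In t (insert_leaf (delete_leaf t k) k) /\
  Permutation (leaves (delete_leaf t k) ++ [k]) (leaves t) /\
  canonical (delete_leaf t k).
Proof.
  induction t as [j|a IHa b IHb]; simpl; intros Hc Hnd Hk Hle Hl. lia.
  pose proof (NoDup_app_remove_r _ _ Hnd). pose proof (NoDup_app_remove_l _ _ Hnd).
  assert (Hlea : forall y, In y (leaves a) -> (y <= k)%nat)
    by (intros; apply Hle, in_or_app; auto).
  assert (Hleb : forall y, In y (leaves b) -> (y <= k)%nat)
    by (intros; apply Hle, in_or_app; auto).
  destruct (is_leaf k b) eqn:Eb.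
  { destruct b as [j|]; simpl in Eb; try discriminate. apply Nat.eqb_eq in Eb; subst.
    split; [destruct a; simpl; auto | split; [apply Permutation_refl | tauto]]. }
  destruct (existsb (Nat.eqb k) (leaves a)) eqn:Ea.
  - apply existsb_eqb_In in Ea.
    assert (La : (2 <= length (leaves a))%nat).
    { destruct a as [j|a1 a2]; simpl in *.
      - destruct Ea as [<-|[]]. pose proof (Hleb _ (min_leaf_In b)). lia.
      - rewrite length_app. pose proof (leaves_nonempty a1). pose proof (leaves_nonempty a2). lia. }
    destruct IHa as [H1 [H2 H3]]; try tauto. repeat split.
    + simpl. right. apply in_or_app; left. apply in_map_iff. exists a; auto.
    + simpl. rewrite <- app_assoc, (Permutation_app_comm (leaves b)), app_assoc.
      apply Permutation_app_tail, H2.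
    + tauto.
    + tauto.
    + simpl. rewrite (delete_leaf_min _ _ _ H2 Hlea). tauto.
  - apply existsb_eqb_notIn in Ea.
    assert (Ek : In k (leaves b)) by (apply in_app_or in Hk; tauto).
    assert (Lb : (2 <= length (leaves b))%nat).
    { destruct b as [j|b1 b2]; simpl in *.
      - destruct Ek as [<-|[]]. rewrite Nat.eqb_refl in Eb. discriminate.
      - rewrite length_app. pose proof (leaves_nonempty b1). pose proof (leaves_nonempty b2). lia. }
    destruct IHb as [H1 [H2 H3]]; try tauto. repeat split.
    + simpl. right. apply in_or_app; right. apply in_map_iff. exists b; auto.
    + simpl. rewrite <- app_assoc. apply Permutation_app_head, H2.
    + tauto.
    + tauto.
    + simpl. rewrite (delete_leaf_min _ _ _ H2 Hleb). tauto.
Qed.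

Lemma canon_trees_complete n t : (1 <= n)%nat -> is_BT n t -> canonical t ->
  In t (canon_trees n).
Proof.
  revert t; induction n as [|p IH]; intros t Hn Hb Hc. lia.
  destruct (Nat.eq_dec p 0) as [->|Hp].
  - destruct t as [j|a b].
    + apply Permutation_length_1 in Hb. simpl in Hb. subst. simpl; auto.
    + exfalso. apply BT_length in Hb. simpl in Hb. rewrite length_app in Hb.
      pose proof (leaves_nonempty a). pose proof (leaves_nonempty b). lia.
  - rewrite canon_trees_S by lia. apply in_flat_map.
    destruct (delete_leaf_spec t (S p)) as [H1 [H2 H3]]; auto.
    + eapply BT_NoDup; eauto.
    + apply (BT_In _ _ _ Hb). lia.
    + intros y Hy. apply (BT_In _ _ _ Hb) in Hy. lia.
    + rewrite (BT_length _ _ Hb). lia.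
    + exists (delete_leaf t (S p)). split; auto. apply IH; auto. lia.
      apply (Permutation_app_inv_r [S p]). rewrite H2, <- seq_S. apply Hb.
Qed.

Lemma canon_trees_enumerate n : (1 <= n)%nat -> enumerates_BT n (canon_trees n).
Proof.
  intros Hn. split; [|split].
  - rewrite Forall_forall. intros x Hx. apply (canon_trees_sound n x Hn Hx).
  - intros t Ht. exists (canonize t). split; [|apply canonize_tiso].
    apply canon_trees_complete; auto.
    + unfold is_BT. rewrite <- (tiso_leaves _ _ (canonize_tiso t)). apply Ht.
    + apply canonize_canonical. eapply BT_NoDup; eauto.
  - pose proof (canon_trees_NoDup n) as Hnd.
    pose proof (fun x Hx => proj2 (canon_trees_sound n x Hn Hx)) as Hcan.
    induction (canon_trees n) as [|a l IH]; constructor; inversion Hnd; subst.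
    + rewrite Forall_forall. intros b Hb Hab. apply H1.
      replace a with b; auto. apply canonical_tiso_eq; simpl in Hcan; auto using tiso_sym.
    + apply IH; auto. intros; apply Hcan; simpl; auto.
Qed.

Lemma enumeration_canonize_perm n l : (1 <= n)%nat -> enumerates_BT n l ->
  Permutation (map canonize l) (canon_trees n).
Proof.
  intros Hn [Hf [Hcov Hp]]. rewrite Forall_forall in Hf.
  assert (Hcan : forall t, In t l -> canonical (canonize t))
    by (intros t Ht; apply canonize_canonical; eapply BT_NoDup; eauto).
  apply NoDup_Permutation; [| apply canon_trees_NoDup |].
  - clear Hcov Hcan. induction Hp as [|a l Ha Hp IH]; simpl; constructor.
    + intros H. apply in_map_iff in H. destruct H as [b [E Hb]].
      rewrite Forall_forall in Ha. apply (Ha b Hb).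
      apply (tiso_trans _ (canonize a)); [apply canonize_tiso|].
      rewrite <- E. apply tiso_sym, canonize_tiso.
    + apply IH. intros; apply Hf; simpl; auto.
  - intros x. split; intros H.
    + apply in_map_iff in H. destruct H as [t [<- Ht]].
      apply canon_trees_complete; auto.
      unfold is_BT. rewrite <- (tiso_leaves _ _ (canonize_tiso t)). apply Hf, Ht.
    + destruct (canon_trees_sound n x Hn H) as [Hb Hc].
      destruct (Hcov x Hb) as [t [Ht Hxt]].
      apply in_map_iff. exists t. split; auto. symmetry.
      apply canonical_tiso_eq; auto. apply (tiso_trans _ t); auto. apply canonize_tiso.
Qed.

Definition sumR (l : list R) : R := fold_right Rplus 0 l.

Lemma sumR_cons x l : sumR (x :: l) = x + sumR l.
Proof. reflexivity. Qed.

Lemma sumR_app l1 l2 : sumR (l1 ++ l2) = sumR l1 + sumR l2.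
Proof. induction l1; simpl; unfold sumR in *; simpl; try rewrite IHl1; lra. Qed.

Lemma sumR_perm l l' : Permutation l l' -> sumR l = sumR l'.
Proof. induction 1; unfold sumR in *; simpl; lra. Qed.

Lemma sumR_ext {A} (f g : A -> R) l :
  (forall x, In x l -> f x = g x) -> sumR (map f l) = sumR (map g l).
Proof. intros H. f_equal. apply map_ext_in. auto. Qed.

Lemma sumR_lin {A} (f g : A -> R) c l :
  sumR (map (fun x => c * f x + g x) l) = c * sumR (map f l) + sumR (map g l).
Proof. induction l; unfold sumR in *; simpl; try rewrite IHl; lra. Qed.

Lemma sumR_plus {A} (f g : A -> R) l :
  sumR (map (fun x => f x + g x) l) = sumR (map f l) + sumR (map g l).
Proof. induction l; unfold sumR in *; simpl; try rewrite IHl; lra. Qed.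

Lemma sumR_scal {A} (f : A -> R) c l : sumR (map (fun x => c * f x) l) = c * sumR (map f l).
Proof. induction l; unfold sumR in *; simpl; try rewrite IHl; lra. Qed.

Lemma sumR_const {A} (d : R) (l : list A) : sumR (map (fun _ => d) l) = INR (length l) * d.
Proof. induction l; rewrite ?map_cons, ?sumR_cons, ?IHl; simpl length; rewrite ?S_INR; simpl; lra. Qed.

Lemma sumR_flat_map {A B} (f : B -> R) (g : A -> list B) l :
  sumR (map f (flat_map g l)) = sumR (map (fun t => sumR (map f (g t))) l).
Proof. induction l; simpl. reflexivity. rewrite map_app, sumR_app, IHl. reflexivity. Qed.

Lemma INR_fold_plus l : INR (fold_right plus 0%nat l) = sumR (map INR l).
Proof. induction l; simpl. reflexivity. rewrite plus_INR, IHl. reflexivity. Qed.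

Lemma mean_Phi_canon n l : (1 <= n)%nat -> enumerates_BT n l ->
  mean_Phi n l = mean_Phi n (canon_trees n).
Proof.
  intros Hn He. pose proof (enumeration_canonize_perm n l Hn He) as Hp. unfold mean_Phi.
  rewrite <- (Permutation_length Hp), length_map. f_equal.
  change (sumR (map (fun t => INR (Phi n t)) l) =
          sumR (map (fun t => INR (Phi n t)) (canon_trees n))).
  rewrite <- (sumR_perm _ _ (Permutation_map (fun t => INR (Phi n t)) Hp)), map_map. apply sumR_ext. intros t Ht.
  destruct He as [Hf _]. rewrite Forall_forall in Hf.
  rewrite <- (Phi_tiso n t (canonize t)); auto using canonize_tiso.
  eapply BT_NoDup; eauto.
Qed.

(** * Totals of subtree statistics over BT_n *)

Definition nleaves (t : tree) : R := INR (length (leaves t)).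
Definition choose2 (x : R) : R := x * (x - 1) / 2.

(* Sum over non-root nodes v of C(|v|,2), resp. of |v|; the former equals Φ. *)
Fixpoint pair_weight (t : tree) : R :=
  match t with
  | Leaf _ => 0
  | Node a b => choose2 (nleaves a) + pair_weight a + choose2 (nleaves b) + pair_weight b
  end.

Fixpoint size_weight (t : tree) : R :=
  match t with
  | Leaf _ => 0
  | Node a b => nleaves a + size_weight a + nleaves b + size_weight b
  end.

Lemma nleaves_Node a b : nleaves (Node a b) = nleaves a + nleaves b.
Proof. unfold nleaves; simpl. rewrite length_app, plus_INR. reflexivity. Qed.

Lemma nleaves_Leaf k : nleaves (Leaf k) = 1.
Proof. reflexivity. Qed.

Lemma nleaves_insert t k x : In x (insert_leaf t k) -> nleaves x = nleaves t + 1.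
Proof.
  intros H. unfold nleaves.
  rewrite (Permutation_length (insert_leaf_leaves _ _ _ H)), length_app, plus_INR.
  simpl. lra.
Qed.

Lemma length_insert_R t k : INR (length (insert_leaf t k)) = 2 * nleaves t - 1.
Proof.
  rewrite insert_leaf_length. unfold nleaves. pose proof (leaves_nonempty t).
  rewrite minus_INR, mult_INR by lia. simpl. lra.
Qed.

(* Inserting a leaf at a given edge raises |v| by one exactly for the nodes
   above the insertion point; summing over the 2|t|-1 positions: *)
Lemma size_weight_insert t k :
  sumR (map size_weight (insert_leaf t k)) = (2 * nleaves t + 2) * size_weight t + nleaves t + 1.
Proof.
  induction t as [j|a IHa b IHb]; [simpl; unfold sumR, nleaves; simpl; lra|].
  cbn [insert_leaf map]. rewrite sumR_cons, map_app, sumR_app, !map_map.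
  rewrite (sumR_ext _ (fun x => 1 * size_weight x + (nleaves a + 1 + nleaves b + size_weight b)))
    by (intros x Hx; simpl; rewrite (nleaves_insert _ _ _ Hx); lra).
  rewrite (sumR_ext (fun x => size_weight (Node a x))
             (fun x => 1 * size_weight x + (nleaves a + size_weight a + nleaves b + 1)))
    by (intros x Hx; simpl; rewrite (nleaves_insert _ _ _ Hx); lra).
  rewrite !sumR_lin, !sumR_const, !length_insert_R, IHa, IHb.
  simpl size_weight. rewrite !nleaves_Node, nleaves_Leaf. ring.
Qed.

Lemma pair_weight_insert t k :
  sumR (map pair_weight (insert_leaf t k)) =
  (2 * nleaves t + 4) * pair_weight t + size_weight t + choose2 (nleaves t).
Proof.
  induction t as [j|a IHa b IHb]; [simpl; unfold sumR, nleaves, choose2; simpl; lra|].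
  cbn [insert_leaf map]. rewrite sumR_cons, map_app, sumR_app, !map_map.
  rewrite (sumR_ext _ (fun x => 1 * pair_weight x +
             (choose2 (nleaves a + 1) + choose2 (nleaves b) + pair_weight b)))
    by (intros x Hx; simpl; rewrite (nleaves_insert _ _ _ Hx); lra).
  rewrite (sumR_ext (fun x => pair_weight (Node a x)) (fun x => 1 * pair_weight x +
             (choose2 (nleaves a) + pair_weight a + choose2 (nleaves b + 1))))
    by (intros x Hx; simpl; rewrite (nleaves_insert _ _ _ Hx); lra).
  rewrite !sumR_lin, !sumR_const, !length_insert_R, IHa, IHb.
  simpl pair_weight. simpl size_weight. rewrite !nleaves_Node, nleaves_Leaf.
  unfold choose2. field.
Qed.

Lemma nleaves_canon_trees n t : (1 <= n)%nat -> In t (canon_trees n) -> nleaves t = INR n.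
Proof.
  intros Hn H. unfold nleaves. rewrite (BT_length n t); auto.
  apply (canon_trees_sound n t Hn H).
Qed.

Definition card_BT (n : nat) : R := INR (dfact (2 * n - 3)).
Definition even_df (n : nat) : R := INR (dfact (2 * n - 2)).

Lemma dfact_pos m : (0 < dfact m)%nat.
Proof.
  assert (H : (0 < dfact m /\ 0 < dfact (S m))%nat).
  { induction m; [simpl; lia|]. split; [tauto|]. rewrite dfact_SS. lia. }
  apply H.
Qed.

Lemma card_BT_pos n : 0 < card_BT n.
Proof. apply lt_0_INR, dfact_pos. Qed.

Lemma card_BT_S p : (1 <= p)%nat -> card_BT (S p) = (2 * INR p - 1) * card_BT p.
Proof.
  intros Hp. unfold card_BT. destruct p as [|[|q]]; [lia | simpl; lra |].
  replace (2 * S (S (S q)) - 3)%nat with (S (S (2 * S (S q) - 3))) by lia.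
  rewrite dfact_SS, mult_INR. f_equal.
  replace (S (S (2 * S (S q) - 3))) with (2 * S (S q) - 1)%nat by lia.
  rewrite minus_INR, mult_INR by lia. simpl. lra.
Qed.

Lemma even_df_S p : (1 <= p)%nat -> even_df (S p) = 2 * INR p * even_df p.
Proof.
  intros Hp. unfold even_df. destruct p as [|q]; [lia|].
  replace (2 * S (S q) - 2)%nat with (S (S (2 * S q - 2))) by lia.
  rewrite dfact_SS, mult_INR. f_equal.
  replace (S (S (2 * S q - 2))) with (2 * S q)%nat by lia.
  rewrite mult_INR. simpl. lra.
Qed.

Lemma card_canon_trees n : (1 <= n)%nat -> INR (length (canon_trees n)) = card_BT n.
Proof. intros; unfold card_BT; rewrite canon_trees_length; auto. Qed.

(* Solution of the coupled recurrences obtained from the two insertion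
   lemmas. *)
Lemma canon_trees_totals n : (1 <= n)%nat ->
  sumR (map size_weight (canon_trees n)) = INR n * (even_df n - card_BT n) /\
  sumR (map pair_weight (canon_trees n)) = choose2 (INR n) * (even_df n / 2 - card_BT n).
Proof.
  induction n as [|p IH]; intros Hn; [lia|].
  destruct (Nat.eq_dec p 0) as [->|Hp].
  { unfold even_df, card_BT, choose2, sumR; simpl. split; lra. }
  destruct IH as [IS IP]; [lia|].
  rewrite canon_trees_S, !sumR_flat_map by lia.
  rewrite (sumR_ext (fun t => sumR (map size_weight (insert_leaf t (S p))))
             (fun t => (2 * INR p + 2) * size_weight t + (INR p + 1))).
  2:{ intros t Ht. rewrite size_weight_insert, (nleaves_canon_trees p t) by (auto; lia). ring. }
  rewrite (sumR_ext (fun t => sumR (map pair_weight (insert_leaf t (S p))))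
             (fun t => (2 * INR p + 4) * pair_weight t + (size_weight t + choose2 (INR p)))).
  2:{ intros t Ht. rewrite pair_weight_insert, (nleaves_canon_trees p t) by (auto; lia). ring. }
  rewrite !sumR_lin, !sumR_plus, !sumR_const, card_canon_trees, IS, IP,
    card_BT_S, even_df_S by lia.
  rewrite S_INR. unfold choose2. split; field.
Qed.

(** * Φ(t) as a sum of pair counts *)

(* Sum of f i j over 1 <= i < j <= n, in the order used by [Phi]. *)
Definition pair_sum (f : nat -> nat -> R) (n : nat) : R :=
  sumR (map (fun i => sumR (map (f i) (seq (S i) (n - i)))) (seq 1 n)).

Lemma pair_sum_ext f g n : (forall i j, f i j = g i j) -> pair_sum f n = pair_sum g n.
Proof. intros H. unfold pair_sum. f_equal. apply map_ext. intros i. f_equal. apply map_ext. auto. Qed.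

Lemma pair_sum_plus f g n : pair_sum (fun i j => f i j + g i j) n = pair_sum f n + pair_sum g n.
Proof. unfold pair_sum. rewrite <- sumR_plus. f_equal. apply map_ext. intros i. apply sumR_plus. Qed.

Lemma pair_sum_zero n : pair_sum (fun _ _ => 0) n = 0.
Proof.
  unfold pair_sum. rewrite (sumR_ext _ (fun _ => 0)).
  - rewrite sumR_const; lra.
  - intros i _. cbv beta. rewrite sumR_const; lra.
Qed.

Lemma Phi_pair_sum n t : INR (Phi n t) = pair_sum (fun i j => INR (lca_depth t i j)) n.
Proof.
  unfold Phi, pair_sum. rewrite INR_fold_plus, sumR_flat_map. f_equal.
  apply map_ext. intros i. rewrite map_map. reflexivity.
Qed.

Definition ind (L : list nat) (i : nat) : R := if existsb (Nat.eqb i) L then 1 else 0.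

Lemma ind_01 L i : ind L i = 0 \/ ind L i = 1.
Proof. unfold ind; destruct (existsb (Nat.eqb i) L); auto. Qed.

Lemma sumR_ind L X :
  sumR (map (ind L) X) = INR (length (filter (fun x => existsb (Nat.eqb x) L) X)).
Proof.
  induction X as [|x X IH]; [reflexivity|]. cbn [map filter]. rewrite sumR_cons, IH. unfold ind.
  destruct (existsb (Nat.eqb x) L); simpl length; rewrite ?S_INR; lra.
Qed.

Lemma sumR_ind_incl L X : NoDup X -> NoDup L -> incl L X -> sumR (map (ind L) X) = INR (length L).
Proof.
  intros HX HL Hinc. rewrite sumR_ind. f_equal. apply Permutation_length.
  apply NoDup_Permutation; auto using NoDup_filter.
  intros x. rewrite filter_In, existsb_eqb_In. intuition.
Qed.

Lemma pairs_of_indicator (g : nat -> R) m a : (forall i, g i = 0 \/ g i = 1) ->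
  sumR (map (fun i => g i * sumR (map g (seq (S i) (a + m - 1 - i)))) (seq a m)) =
  choose2 (sumR (map g (seq a m))).
Proof.
  intros Hg. revert a; induction m as [|m IH]; intros a; [unfold sumR, choose2; simpl; lra|].
  cbn [seq map]. rewrite !sumR_cons.
  replace (a + S m - 1 - a)%nat with m by lia.
  rewrite (sumR_ext (fun i => g i * sumR (map g (seq (S i) (a + S m - 1 - i)))) 
             (fun i => g i * sumR (map g (seq (S i) (S a + m - 1 - i))))).
  2:{ intros i _. do 5 f_equal. lia. }
  rewrite IH. unfold choose2. destruct (Hg a) as [-> | ->]; field.
Qed.

Lemma pair_sum_indicator L n : NoDup L -> incl L (seq 1 n) ->
  pair_sum (fun i j => ind L i * ind L j) n = choose2 (INR (length L)).
Proof.
  intros HL Hinc. unfold pair_sum.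
  rewrite (sumR_ext _ (fun i => ind L i * sumR (map (ind L) (seq (S i) (1 + n - 1 - i))))).
  - rewrite pairs_of_indicator, sumR_ind_incl; auto using ind_01, seq_NoDup.
  - intros i _. rewrite sumR_scal. do 4 f_equal. lia.
Qed.

Lemma lca_depth_outside t i j : ~ (In i (leaves t) /\ In j (leaves t)) -> lca_depth t i j = 0%nat.
Proof.
  destruct t as [k|a b]; simpl; auto. intros H.
  rewrite !(in_app_iff (leaves a)), <- !existsb_eqb_In in H.
  destruct (existsb (Nat.eqb i) (leaves a)), (existsb (Nat.eqb j) (leaves a)),
    (existsb (Nat.eqb i) (leaves b)), (existsb (Nat.eqb j) (leaves b)); simpl; intuition.
Qed.

Lemma lca_depth_Node a b i j : NoDup (leaves (Node a b)) ->
  INR (lca_depth (Node a b) i j) =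
  ind (leaves a) i * ind (leaves a) j + ind (leaves b) i * ind (leaves b) j
  + INR (lca_depth a i j) + INR (lca_depth b i j).
Proof.
  intros Hnd. simpl in Hnd. unfold ind. simpl lca_depth.
  destruct (existsb (Nat.eqb i) (leaves a)) eqn:Eia, (existsb (Nat.eqb j) (leaves a)) eqn:Eja,
    (existsb (Nat.eqb i) (leaves b)) eqn:Eib, (existsb (Nat.eqb j) (leaves b)) eqn:Ejb;
    repeat match goal with
    | H : existsb _ _ = true |- _ => apply existsb_eqb_In in H
    | H : existsb _ _ = false |- _ => apply existsb_eqb_notIn in H
    end;
    try solve [exfalso; eapply NoDup_app_disjoint; eauto]; simpl andb; cbv iota;
    try rewrite (lca_depth_outside a i j) by tauto;
    try rewrite (lca_depth_outside b i j) by tauto; rewrite ?S_INR; simpl INR; lra.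
Qed.

Lemma pair_sum_lca_depth n t : NoDup (leaves t) -> incl (leaves t) (seq 1 n) ->
  pair_sum (fun i j => INR (lca_depth t i j)) n = pair_weight t.
Proof.
  induction t as [k|a IHa b IHb]; intros Hnd Hinc; [apply pair_sum_zero|].
  rewrite (pair_sum_ext _ (fun i j =>
      (ind (leaves a) i * ind (leaves a) j + ind (leaves b) i * ind (leaves b) j)
      + (INR (lca_depth a i j) + INR (lca_depth b i j))))
    by (intros i j; rewrite lca_depth_Node; auto; lra).
  simpl in Hnd, Hinc. apply incl_app_inv in Hinc. destruct Hinc as [Ia Ib].
  pose proof (NoDup_app_remove_r _ _ Hnd). pose proof (NoDup_app_remove_l _ _ Hnd).
  rewrite !pair_sum_plus, !pair_sum_indicator, IHa, IHb by auto.
  simpl. unfold nleaves. lra.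
Qed.

Lemma Phi_pair_weight n t : is_BT n t -> INR (Phi n t) = pair_weight t.
Proof.
  intros H. rewrite Phi_pair_sum. apply pair_sum_lca_depth; [eapply BT_NoDup; eauto|].
  intros x Hx. eapply Permutation_in; eauto.
Qed.

Lemma mean_Phi_closed n : (1 <= n)%nat ->
  mean_Phi n (canon_trees n) = choose2 (INR n) * (even_df n / (2 * card_BT n) - 1).
Proof.
  intros Hn. unfold mean_Phi.
  change (fold_right Rplus 0 ?l) with (sumR l).
  rewrite (sumR_ext _ pair_weight)
    by (intros t Ht; apply Phi_pair_weight, (canon_trees_sound n t Hn Ht)).
  rewrite (proj2 (canon_trees_totals n Hn)), card_canon_trees by auto.
  pose proof (card_BT_pos n). field. lra.
Qed.

(** * The hypergeometric sum *)

(* b_m(k) = Π_{i<k} 2(m-i)/(2m-i): the ratio (-m)_k 2^k / (-2m)_k. *)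
Fixpoint hterm (m k : nat) : R :=
  match k with
  | O => 1
  | S k' => hterm m k' * (2 * (INR m - INR k') / (2 * INR m - INR k'))
  end.

Definition wallis_ratio (m : nat) : R := INR (dfact (2 * m)) / INR (dfact (2 * m - 1)).

Lemma INR_dfact_SS k : INR (dfact (S (S k))) = (INR k + 2) * INR (dfact k).
Proof. rewrite dfact_SS, mult_INR, !S_INR. ring. Qed.

Lemma wallis_ratio_pos m : 0 < wallis_ratio m.
Proof. unfold wallis_ratio. apply Rdiv_lt_0_compat; apply lt_0_INR, dfact_pos. Qed.

Lemma wallis_ratio_S m : wallis_ratio (S m) = wallis_ratio m * (2 * INR m + 2) / (2 * INR m + 1).
Proof.
  unfold wallis_ratio. destruct m as [|m]; [simpl; lra|].
  replace (2 * S (S m))%nat with (S (S (2 * S m))) by lia.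
  replace (S (S (2 * S m)) - 1)%nat with (S (S (2 * S m - 1))) by lia.
  rewrite !INR_dfact_SS, minus_INR, mult_INR by lia.
  pose proof (lt_0_INR _ (dfact_pos (2 * S m - 1))). pose proof (pos_INR (S m)).
  simpl (INR 2). simpl (INR 1). field. lra.
Qed.

Lemma even_df_card_BT n : (2 <= n)%nat -> even_df n / card_BT n = wallis_ratio (n - 1).
Proof. intros Hn. unfold even_df, card_BT, wallis_ratio. do 3 f_equal; lia. Qed.

Lemma telescope (T : nat -> R) N : sum_f_R0 (fun k => T k - T (S k)) N = T O - T (S N).
Proof. induction N; simpl; [lra|]. rewrite IHN. lra. Qed.

Lemma hterm_vanish m : hterm m (S m) = 0.
Proof. simpl. replace (INR m - INR m) with 0 by lra. unfold Rdiv. ring. Qed.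

(* Σ_k ((k+1)^2 - 2m - 2) b_m(k) = -(2m+1), by telescoping with
   T(k) = (k-1)(2m+1-k) b_m(k). *)
Lemma hterm_weighted_sum m : (1 <= m)%nat ->
  sum_f_R0 (fun k => ((INR k + 1) ^ 2 - 2 * INR m - 2) * hterm m k) m = - (2 * INR m + 1).
Proof.
  intros Hm.
  set (T := fun k => (INR k - 1) * (2 * INR m + 1 - INR k) * hterm m k).
  rewrite (sum_eq _ (fun k => T k - T (S k))).
  - rewrite telescope. unfold T. rewrite hterm_vanish. simpl. lra.
  - intros k Hk. unfold T. simpl hterm. rewrite S_INR.
    assert (INR k <= INR m) by (apply le_INR; auto).
    assert (1 <= INR m) by (apply (le_INR 1); auto).
    field. lra.
Qed.

Lemma hterm_shift m k : (1 <= m)%nat -> (k <= S m)%nat ->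
  hterm m k * (INR m + 1) * (2 * INR m + 2 - INR k) * (2 * INR m + 1 - INR k)
  = hterm (S m) k * (INR m + 1 - INR k) * (2 * INR m + 2) * (2 * INR m + 1).
Proof.
  intros Hm. induction k as [|k IH]; intros Hk; [simpl; ring|].
  assert (INR k <= INR m) by (apply le_INR; lia).
  assert (1 <= INR m) by (apply (le_INR 1); auto).
  specialize (IH ltac:(lia)). cbn [hterm]. rewrite !S_INR.
  transitivity (2 * (INR m - INR k) / (2 * INR m + 2 - INR k) *
                (hterm (S m) k * (INR m + 1 - INR k) * (2 * INR m + 2) * (2 * INR m + 1))).
  - rewrite <- IH. field. lra.
  - field. lra.
Qed.

(* WZ certificate: (2m+1)/(2m+2) b_{m+1}(k) - b_m(k) = G(k+1) - G(k). *)
Definition wz_cert (m k : nat) : R :=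
  - INR k * (2 * INR m + 1) * hterm (S m) k / (2 * (INR m + 1) * (2 * INR m + 2 - INR k)).

Lemma wz_pair m k : (1 <= m)%nat -> (k <= S m)%nat ->
  hterm (S m) k * (2 * INR m + 1) / (2 * INR m + 2) - hterm m k = wz_cert m (S k) - wz_cert m k.
Proof.
  intros Hm Hk. unfold wz_cert.
  assert (INR k <= INR m + 1) by (rewrite <- S_INR; apply le_INR; lia).
  assert (1 <= INR m) by (apply (le_INR 1); auto).
  pose proof (hterm_shift m k Hm Hk) as HR.
  assert (Hb : hterm m k = hterm (S m) k * (INR m + 1 - INR k) * (2 * INR m + 2) *
      (2 * INR m + 1) / ((INR m + 1) * (2 * INR m + 2 - INR k) * (2 * INR m + 1 - INR k)))
    by (rewrite <- HR; field; repeat split; lra).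
  rewrite Hb. cbn [hterm]. rewrite !S_INR. field. repeat split; lra.
Qed.

Lemma hterm_sum_step m : (1 <= m)%nat ->
  sum_f_R0 (hterm (S m)) (S m) * ((2 * INR m + 1) / (2 * INR m + 2)) = sum_f_R0 (hterm m) m.
Proof.
  intros Hm.
  assert (H := sum_eq _ _ (S m) (fun k Hk => wz_pair m k Hm Hk)).
  rewrite (sum_eq (fun k => wz_cert m (S k) - wz_cert m k)
             (fun k => (fun j => - wz_cert m j) k - (fun j => - wz_cert m j) (S k)))
    in H by (intros; ring).
  rewrite telescope in H.
  replace (wz_cert m 0) with 0 in H by (unfold wz_cert; simpl; unfold Rdiv; ring).
  replace (wz_cert m (S (S m))) with 0 in H by (unfold wz_cert; rewrite hterm_vanish; unfold Rdiv; ring).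
  rewrite (sum_eq _ (fun k => hterm (S m) k * ((2 * INR m + 1) / (2 * INR m + 2)) + hterm m k * (-1)))
    in H by (intros; unfold Rdiv; ring).
  rewrite sum_plus, <- !scal_sum, (tech5 (hterm m) m), hterm_vanish in H. lra.
Qed.

Lemma hterm_sum m : sum_f_R0 (hterm m) m = wallis_ratio m.
Proof.
  induction m as [|m IH]; [unfold wallis_ratio; simpl; lra|].
  destruct (Nat.eq_dec m 0) as [->|Hm]; [unfold wallis_ratio; simpl; lra|].
  assert (1 <= INR m) by (apply (le_INR 1); lia).
  apply (Rmult_eq_reg_r ((2 * INR m + 1) / (2 * INR m + 2))).
  - rewrite hterm_sum_step, IH, wallis_ratio_S by lia. field. lra.
  - apply Rgt_not_eq, Rdiv_lt_0_compat; lra.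
Qed.

Lemma poch_1 k : poch 1 k = INR (fact k).
Proof. induction k; simpl poch; [simpl; lra|]. rewrite IHk. cbn [fact]. rewrite mult_INR, S_INR. ring. Qed.

Lemma poch_2 k : poch 2 k = (INR k + 1) * INR (fact k).
Proof. induction k; simpl poch; [simpl; lra|]. rewrite IHk. cbn [fact]. rewrite mult_INR, !S_INR. ring. Qed.

Lemma poch_hterm m k : (1 <= m)%nat -> (k <= m)%nat ->
  poch (- 2 * INR m) k <> 0 /\ poch (- INR m) k * 2 ^ k = hterm m k * poch (- 2 * INR m) k.
Proof.
  intros Hm. induction k as [|k IH]; intros Hk; [simpl; split; lra|].
  destruct (IH ltac:(lia)) as [H1 H2].
  assert (INR k + 1 <= INR m) by (rewrite <- S_INR; apply le_INR; auto).
  assert (1 <= INR m) by (apply (le_INR 1); auto).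
  cbn [poch hterm pow]. split.
  - apply Rmult_integral_contrapositive. split; auto. lra.
  - transitivity (poch (- INR m) k * 2 ^ k * (2 * (- INR m + INR k))); [ring|].
    rewrite H2. field. lra.
Qed.

Lemma F32_closed n : (3 <= n)%nat -> F32 n = (2 * INR n - 3) * (wallis_ratio (n - 1) - 1).
Proof.
  intros Hn. set (m := (n - 2)%nat).
  assert (Hm : (1 <= m)%nat) by lia.
  assert (Rm : INR n = INR m + 2) by (unfold m; rewrite minus_INR by lia; simpl; lra).
  replace (n - 1)%nat with (S m) by lia.
  unfold F32. fold m.
  rewrite (sum_eq _ (fun k => ((INR k + 1) ^ 2 - 2 * INR m - 2) * hterm m k +
                              hterm m k * (2 * INR m + 2))).
  2:{ intros k Hk. destruct (poch_hterm m k Hm Hk) as [H1 H2].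
      rewrite !poch_1, !poch_2, Rm.
      replace (2 - (INR m + 2)) with (- INR m) by ring.
      replace (4 - 2 * (INR m + 2)) with (- 2 * INR m) by ring.
      assert (INR (fact k) <> 0) by (apply not_0_INR, fact_neq_0).
      transitivity ((INR k + 1) ^ 2 * (poch (- INR m) k * 2 ^ k) / poch (- 2 * INR m) k).
      - field. auto.
      - rewrite H2. field. auto. }
  rewrite sum_plus, hterm_weighted_sum, <- scal_sum, hterm_sum, wallis_ratio_S, Rm by auto.
  assert (1 <= INR m) by (apply (le_INR 1); auto).
  field. lra.
Qed.

Lemma C_n_2 n : (2 <= n)%nat -> C n 2 = choose2 (INR n).
Proof.
  intros Hn. destruct n as [|[|p]]; try lia. unfold C, choose2.
  replace (S (S p) - 2)%nat with p by lia.
  cbn [fact]. rewrite !mult_INR, !S_INR, INR_0.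
  pose proof (lt_0_INR _ (lt_O_fact p)). field. lra.
Qed.

Lemma INR_ge3 n : (3 <= n)%nat -> 3 <= INR n.
Proof. intros H. replace 3 with (INR 3) by (simpl; lra). apply le_INR, H. Qed.

Lemma mean_Phi_wallis n : (2 <= n)%nat ->
  mean_Phi n (canon_trees n) = choose2 (INR n) * (wallis_ratio (n - 1) / 2 - 1).
Proof.
  intros Hn. rewrite mean_Phi_closed, <- even_df_card_BT by lia.
  pose proof (card_BT_pos n). field. lra.
Qed.

Lemma EU_formula_wallis n : (3 <= n)%nat ->
  EU_formula n = choose2 (INR n) * (wallis_ratio (n - 1) / 2 - 1).
Proof.
  intros Hn. unfold EU_formula. rewrite C_n_2, F32_closed by lia.
  fold (even_df n) (card_BT n). rewrite even_df_card_BT by lia.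
  pose proof (INR_ge3 n Hn). field. lra.
Qed.

Lemma EU_Phi_canon n : (1 <= n)%nat -> EU_Phi_is n (mean_Phi n (canon_trees n)).
Proof.
  intros Hn. split.
  - exists (canon_trees n). apply canon_trees_enumerate, Hn.
  - intros l Hl. apply mean_Phi_canon; auto.
Qed.

Lemma EU_Phi_unique n e : (1 <= n)%nat -> EU_Phi_is n e -> e = mean_Phi n (canon_trees n).
Proof. intros Hn [_ H]. symmetry. apply H, canon_trees_enumerate, Hn. Qed.

(** * Wallis bounds on (2m)!!/(2m-1)!! *)

(* Coquelicot is imported only inside this module, since its notations
   (e.g. the complex numbers [C]) would clash with the binomial [C]. *)
Module WallisIntegrals.
Import Coquelicot.Coquelicot.

Definition wallis_int (k : nat) : R := RInt (fun x => sin x ^ k) 0 (PI / 2).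

Lemma ex_wallis_int k : ex_RInt (fun x => sin x ^ k) 0 (PI / 2).
Proof.
  apply (@ex_RInt_continuous R_CompleteNormedModule). intros z _.
  apply (@ex_derive_continuous R_AbsRing R_NormedModule). auto_derive. auto.
Qed.

Lemma wallis_primitive k x :
  is_derive (fun x => - cos x * sin x ^ S k) x
            ((INR k + 2) * sin x ^ S (S k) - (INR k + 1) * sin x ^ k).
Proof.
  auto_derive; auto.
  change (match k with 0%nat => 1 | S _ => INR k + 1 end) with (INR (S k)).
  assert (E : cos x * cos x = 1 - sin x * sin x)
    by (pose proof (sin2_cos2 x); unfold Rsqr in *; lra).
  rewrite S_INR.
  transitivity (sin x * sin x * sin x ^ k - (cos x * cos x) * (INR k + 1) * sin x ^ k); [ring|].
  rewrite E. simpl pow. ring.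
Qed.

Lemma wallis_int_rec k : (INR k + 2) * wallis_int (S (S k)) = (INR k + 1) * wallis_int k.
Proof.
  assert (H : is_RInt (fun x => (INR k + 2) * sin x ^ S (S k) - (INR k + 1) * sin x ^ k) 0 (PI / 2)
                (minus (- cos (PI / 2) * sin (PI / 2) ^ S k) (- cos 0 * sin 0 ^ S k))).
  { apply (@is_RInt_derive R_CompleteNormedModule (fun x => - cos x * sin x ^ S k)).
    - intros x _. apply wallis_primitive.
    - intros x _. apply (@ex_derive_continuous R_AbsRing R_NormedModule). auto_derive. auto. }
  rewrite cos_PI2, sin_0 in H.
  replace (minus (- 0 * sin (PI / 2) ^ S k) (- cos 0 * 0 ^ S k)) with 0 in H
    by (unfold minus, plus, opp; simpl; ring).
  apply (@is_RInt_unique R_CompleteNormedModule) in H.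
  rewrite (RInt_ext _ (fun x => minus (scal (INR k + 2) (sin x ^ S (S k)))
                                        (scal (INR k + 1) (sin x ^ k)))) in H
    by (intros; reflexivity).
  rewrite (@RInt_minus R_CompleteNormedModule) in H
    by (apply (@ex_RInt_scal R_CompleteNormedModule), ex_wallis_int).
  rewrite !(@RInt_scal R_CompleteNormedModule) in H by apply ex_wallis_int.
  unfold wallis_int. unfold minus, plus, opp, scal in H; simpl in H.
  unfold mult in H; simpl in H |- *. lra.
Qed.

Lemma wallis_int_0 : wallis_int 0 = PI / 2.
Proof.
  unfold wallis_int. simpl pow. rewrite (@RInt_const R_CompleteNormedModule).
  unfold scal; simpl. unfold mult; simpl. lra.
Qed.

Lemma wallis_int_1 : wallis_int 1 = 1.
Proof.
  assert (H : is_RInt (fun x => sin x) 0 (PI / 2) (minus (- cos (PI / 2)) (- cos 0))).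
  { apply (@is_RInt_derive R_CompleteNormedModule (fun x => - cos x)).
    - intros x _. auto_derive; auto. ring.
    - intros x _. apply (@ex_derive_continuous R_AbsRing R_NormedModule). auto_derive. auto. }
  rewrite cos_PI2, cos_0 in H. apply (@is_RInt_unique R_CompleteNormedModule) in H.
  unfold wallis_int. rewrite (RInt_ext _ (fun x => sin x)) by (intros; simpl; ring).
  rewrite H. unfold minus, plus, opp; simpl. ring.
Qed.

(* 0 <= sin <= 1 on [0, π/2], so I_k is nonincreasing. *)
Lemma wallis_int_decr k : wallis_int (S k) <= wallis_int k.
Proof.
  unfold wallis_int. pose proof PI_RGT_0.
  apply RInt_le; try lra; try apply ex_wallis_int.
  intros x Hx.
  assert (0 <= sin x) by (apply sin_ge_0; lra).
  assert (sin x <= 1) by apply SIN_bound.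
  assert (0 <= sin x ^ k) by (apply pow_le; auto).
  simpl. nra.
Qed.

Lemma wallis_int_closed m :
  wallis_int (2 * m) = PI / (2 * wallis_ratio m) /\
  wallis_int (S (2 * m)) = wallis_ratio m / (2 * INR m + 1).
Proof.
  induction m as [|m [IH1 IH2]].
  { simpl. rewrite wallis_int_0, wallis_int_1. unfold wallis_ratio; simpl. split; field. }
  pose proof (wallis_ratio_pos m). pose proof (pos_INR m).
  replace (2 * S m)%nat with (S (S (2 * m))) by lia.
  pose proof (wallis_int_rec (2 * m)) as R0. pose proof (wallis_int_rec (S (2 * m))) as R1.
  rewrite mult_INR in R0. rewrite S_INR, mult_INR in R1.
  replace (INR 2) with 2 in R0, R1 by (simpl; lra).
  rewrite IH1 in R0. rewrite IH2 in R1. rewrite wallis_ratio_S, S_INR.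
  split.
  - apply (Rmult_eq_reg_l (2 * INR m + 2)); [|lra]. rewrite R0. field. lra.
  - apply (Rmult_eq_reg_l (2 * INR m + 1 + 2)); [|lra]. rewrite R1. field. lra.
Qed.

(* Comparing I_{2m+2} <= I_{2m+1} and I_{2m+1} <= I_{2m}. *)
Lemma wallis_ratio_bounds m : (1 <= m)%nat ->
  PI * INR m <= wallis_ratio m ^ 2 <= PI * (INR m + / 2).
Proof.
  intros Hm. pose proof PI_RGT_0. split.
  - destruct m as [|m]; [lia|].
    pose proof (wallis_int_decr (S (2 * m))) as M.
    replace (S (S (2 * m))) with (2 * S m)%nat in M by lia.
    rewrite (proj1 (wallis_int_closed (S m))), (proj2 (wallis_int_closed m)) in M.
    pose proof (wallis_ratio_pos (S m)) as Hb. rewrite S_INR.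
    pose proof (pos_INR m). set (b := wallis_ratio (S m)) in *.
    replace (wallis_ratio m / (2 * INR m + 1)) with (b / (2 * INR m + 2)) in M
      by (unfold b; rewrite wallis_ratio_S; field; lra).
    apply (Rmult_le_compat_r (2 * b * (2 * INR m + 2))) in M; [|nra].
    replace (PI / (2 * b) * (2 * b * (2 * INR m + 2))) with (PI * (2 * INR m + 2)) in M
      by (field; lra).
    replace (b / (2 * INR m + 2) * (2 * b * (2 * INR m + 2))) with (2 * b ^ 2) in M
      by (field; lra).
    lra.
  - pose proof (wallis_int_decr (2 * m)) as M.
    rewrite (proj1 (wallis_int_closed m)), (proj2 (wallis_int_closed m)) in M.
    pose proof (wallis_ratio_pos m). pose proof (pos_INR m).
    set (a := wallis_ratio m) in *.
    apply (Rmult_le_compat_r (2 * a * (2 * INR m + 1))) in M; [|nra].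
    replace (a / (2 * INR m + 1) * (2 * a * (2 * INR m + 1))) with (2 * a ^ 2) in M
      by (field; lra).
    replace (PI / (2 * a) * (2 * a * (2 * INR m + 1))) with (PI * (2 * INR m + 1)) in M
      by (field; lra).
    lra.
Qed.

End WallisIntegrals.

(** * Asymptotics *)

Lemma wallis_ratio_sqrt_bounds m : (1 <= m)%nat ->
  sqrt PI * (sqrt (INR m + 1) - 1) <= wallis_ratio m <= sqrt PI * sqrt (INR m + 1).
Proof.
  intros Hm. destruct (WallisIntegrals.wallis_ratio_bounds m Hm) as [Wl Wu].
  pose proof (wallis_ratio_pos m). pose proof PI_RGT_0. pose proof (pos_INR m).
  set (s := sqrt (INR m + 1)). set (p := sqrt PI).
  assert (Hs : s * s = INR m + 1) by (apply sqrt_sqrt; lra).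
  assert (Hp : p * p = PI) by (apply sqrt_sqrt; lra).
  assert (Hs1 : 1 <= s) by (rewrite <- sqrt_1; apply sqrt_le_1_alt; lra).
  assert (0 <= p) by apply sqrt_pos.
  split.
  - destruct (Rle_dec (p * (s - 1)) 0); [lra|].
    apply Rsqr_incr_0_var; [unfold Rsqr | lra].
    replace (p * (s - 1) * (p * (s - 1))) with (PI * (s * s - 2 * s + 1))
      by (rewrite <- Hp; ring).
    nra.
  - apply Rsqr_incr_0_var; [unfold Rsqr | nra].
    replace (p * s * (p * s)) with (PI * (INR m + 1)) by (rewrite <- Hp, <- Hs; ring).
    nra.
Qed.

Lemma normalized_mean_error n : (3 <= n)%nat ->
  Rabs (choose2 (INR n) * (wallis_ratio (n - 1) / 2 - 1)
        / (sqrt PI / 4 * Rpower (INR n) (5 / 2)) - 1) <= 4 / sqrt (INR n).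
Proof.
  intros Hn. pose proof (INR_ge3 n Hn) as Hx.
  assert (Hxm : INR (n - 1) + 1 = INR n) by (rewrite minus_INR by lia; simpl; lra).
  destruct (wallis_ratio_sqrt_bounds (n - 1) ltac:(lia)) as [Wl Wu]. rewrite Hxm in Wl, Wu.
  set (x := INR n) in *. set (W := wallis_ratio (n - 1)) in *.
  set (s := sqrt x) in *. set (p := sqrt PI) in *.
  assert (Rp : Rpower x (5 / 2) = x ^ 2 * s).
  { replace (5 / 2) with (INR 2 + / 2) by (simpl; lra).
    rewrite Rpower_plus, Rpower_pow, Rpower_sqrt by lra. reflexivity. }
  assert (Hs : s * s = x) by (apply sqrt_sqrt; lra).
  assert (Hs1 : 1 <= s) by (rewrite <- sqrt_1; apply sqrt_le_1_alt; lra).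
  assert (Hp1 : 1 <= p).
  { rewrite <- sqrt_1; apply sqrt_le_1_alt; pose proof PI2_1; lra. }
  assert (Hd : 0 < p * x * s) by (apply Rmult_lt_0_compat; nra).
  rewrite Rp.
  replace (choose2 x * (W / 2 - 1) / (p / 4 * (x ^ 2 * s))) with ((x - 1) * (W - 2) / (p * x * s))
    by (unfold choose2; field; repeat split; nra).
  assert (U : (x - 1) * (W - 2) <= p * x * s) by nra.
  assert (L1 : (x - 1) * (p * (s - 1) - 2) <= (x - 1) * (W - 2))
    by (apply Rmult_le_compat_l; lra).
  assert (p * s <= p * x) by (apply Rmult_le_compat_l; nra).
  assert (x <= p * x) by nra.
  assert (L : p * x * s - 4 * p * x <= (x - 1) * (W - 2)) by lra.
  replace (4 / s) with (4 * p * x / (p * x * s)) by (field; nra).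
  replace ((x - 1) * (W - 2) / (p * x * s) - 1) with (((x - 1) * (W - 2) - p * x * s) / (p * x * s))
    by (field; lra).
  unfold Rdiv. rewrite Rabs_mult, (Rabs_right (/ (p * x * s)))
    by (apply Rle_ge, Rlt_le, Rinv_0_lt_compat, Hd).
  apply Rmult_le_compat_r; [left; apply Rinv_0_lt_compat, Hd |].
  apply Rabs_le. lra.
Qed.

Lemma Un_cv_sqrt_rate (u : nat -> R) l c N0 :
  (forall n, (N0 <= n)%nat -> Rabs (u n - l) <= c / sqrt (INR n)) -> Un_cv u l.
Proof.
  intros Hu eps Heps.
  destruct (archimed ((c / eps) ^ 2)) as [HN _].
  exists (max (S N0) (Z.to_nat (up ((c / eps) ^ 2)))). intros n Hn.
  assert (Hn1 : 1 <= INR n) by (apply (le_INR 1); lia).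
  assert (HNn : (c / eps) ^ 2 < INR n).
  { apply (Rlt_le_trans _ (IZR (up ((c / eps) ^ 2)))); auto.
    destruct (Z_le_gt_dec (up ((c / eps) ^ 2)) 0) as [Hz|Hz].
    - apply IZR_le in Hz. lra.
    - rewrite <- (Z2Nat.id (up _)), <- INR_IZR_INZ by lia. apply le_INR. lia. }
  assert (Hs : 0 < sqrt (INR n)) by (apply sqrt_lt_R0; lra).
  assert (Hc : c / eps < sqrt (INR n)).
  { destruct (Rle_dec (c / eps) 0); [lra|].
    rewrite <- (sqrt_pow2 (c / eps)) by lra. apply sqrt_lt_1; nra. }
  unfold R_dist. eapply Rle_lt_trans; [apply Hu; lia|].
  apply (Rmult_lt_reg_r (sqrt (INR n))); auto. unfold Rdiv.
  rewrite Rmult_assoc, Rinv_l by lra.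
  apply (Rmult_lt_reg_r (/ eps)); [apply Rinv_0_lt_compat; lra|].
  replace (eps * sqrt (INR n) * / eps) with (sqrt (INR n)) by (field; lra).
  unfold Rdiv in Hc. lra.
Qed.

Theorem mainTheorem19 :
  (forall n : nat, (3 <= n)%nat -> EU_Phi_is n (EU_formula n)) /\
  (forall E : nat -> R,
     (forall n : nat, (3 <= n)%nat -> EU_Phi_is n (E n)) ->
     Un_cv (fun n => E n / (sqrt PI / 4 * Rpower (INR n) (5 / 2))) 1).
Proof.
  split.
  - intros n Hn. rewrite EU_formula_wallis, <- mean_Phi_wallis by lia.
    apply EU_Phi_canon. lia.
  - intros E HE. apply (Un_cv_sqrt_rate _ _ 4 3). intros n Hn.
    rewrite (EU_Phi_unique n (E n)), mean_Phi_wallis by (auto; lia).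
    apply normalized_mean_error, Hn.
Qed.
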